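(* Let $m\ge1$ and $\Lambda=(\lambda_1,\dots,\lambda_m)$ with each $\lambda_i$ a prime or $0$. There is a first-order formula $D_\Lambda(\bar y_1,\dots,\bar y_m)$ in the language of rings such that, in any commutative ring $B$ with unit, $B\models D_\Lambda(\bar b_1,\dots,\bar b_m)$ iff the ideals $\mathfrak q_i=id(\bar b_i)$ are proper prime ideals with $\mathfrak q_1\cdots\mathfrak q_m=0$ and $\mathrm{char}(B/\mathfrak q_i)=\lambda_i$ whenever $\lambda_i>0$. Moreover, let $A$ be a commutative ring with unit and $\mathfrak P=(\mathfrak p_1,\dots,\mathfrak p_m)$ finitely generated prime ideals with $\mathfrak p_1\cdots\mathfrak p_m=0$, $\Lambda=(\mathrm{char}(A/\mathfrak p_1),\dots,\mathrm{char}(A/\mathfrak p_m))$, such that $\mathfrak P$ has the least number of zero entries in its characteristic tuple among all such decompositions of $0$ into $m$ finitely generated prime ideals. Then for every ring $B\equiv A$ and all tuples $\bar b_1,\dots,\bar b_m$ in $B$ with $B\models D_\Lambda(\bar b_1,\dots,\bar b_m)$: each $\mathfrak q_i=id(\bar b_i)$ is prime, $\mathfrak q_1\cdots\mathfrak q_m=0$, and $\mathrm{char}(B/\mathfrak q_i)=\lambda_i$ for all $i=1,\dots,m$.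
   Context: $id(\bar b)$ is the ideal generated by the entries of the finite tuple $\bar b$; it is defined by the formula $\exists z_1\dots z_k\,(x=b_1z_1+\cdots+b_kz_k)$. $\mathrm{char}$ of an integral domain is its characteristic. *)

From HB Require Import structures.
From mathcomp Require Import all_boot all_order all_algebra.
Set Implicit Arguments. Unset Strict Implicit. Unset Printing Implicit Defensive.
Import GRing.Theory.
Local Open Scope ring_scope.

(* Terms: bound/free variables RVar n, and distinguished parameter variables
   RPar i j standing for y_{i,j} (the j-th entry of the i-th tuple y_i). *)
Inductive rterm : Type :=
| RVar of nat
| RPar of nat & nat
| RZero | ROne
| RAdd of rterm & rterm
| ROpp of rterm
| RMul of rterm & rterm.

Inductive rform : Type :=
| REq of rterm & rterm
| RFalse
| RNot of rform
| RAnd of rform & rform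
| ROr of rform & rform
| RImp of rform & rform
| RAll of nat & rform
| REx of nat & rform.

Definition set_env (R : Type) (e : nat -> R) (n : nat) (x : R) : nat -> R :=
  fun k => if k == n then x else e k.

Fixpoint teval (R : comPzRingType) (p : nat -> nat -> R) (e : nat -> R)
  (t : rterm) : R :=
  match t with
  | RVar n => e n
  | RPar i j => p i j
  | RZero => 0
  | ROne => 1
  | RAdd t u => teval p e t + teval p e u
  | ROpp t => - teval p e t
  | RMul t u => teval p e t * teval p e u
  end.

Fixpoint fholds (R : comPzRingType) (p : nat -> nat -> R) (e : nat -> R)
  (f : rform) : Prop :=
  match f with
  | REq t u => teval p e t = teval p e u
  | RFalse => False
  | RNot g => ~ fholds p e g
  | RAnd g h => fholds p e g /\ fholds p e h
  | ROr g h => fholds p e g \/ fholds p e h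
  | RImp g h => fholds p e g -> fholds p e h
  | RAll n g => forall x : R, fholds p (set_env e n x) g
  | REx n g => exists x : R, fholds p (set_env e n x) g
  end.

Fixpoint tvars (t : rterm) : seq nat :=
  match t with
  | RVar n => [:: n]
  | RPar _ _ | RZero | ROne => [::]
  | RAdd t u | RMul t u => tvars t ++ tvars u
  | ROpp t => tvars t
  end.

Fixpoint tpars (t : rterm) : seq (nat * nat) :=
  match t with
  | RPar i j => [:: (i, j)]
  | RVar _ | RZero | ROne => [::]
  | RAdd t u | RMul t u => tpars t ++ tpars u
  | ROpp t => tpars t
  end.

Fixpoint fvars (f : rform) : seq nat :=
  match f with
  | REq t u => tvars t ++ tvars u
  | RFalse => [::]
  | RNot g => fvars g
  | RAnd g h | ROr g h | RImp g h => fvars g ++ fvars h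
  | RAll n g | REx n g => filter (fun k => k != n) (fvars g)
  end.

Fixpoint fpars (f : rform) : seq (nat * nat) :=
  match f with
  | REq t u => tpars t ++ tpars u
  | RFalse => [::]
  | RNot g => fpars g
  | RAnd g h | ROr g h | RImp g h => fpars g ++ fpars h
  | RAll _ g | REx _ g => fpars g
  end.

Definition sentence (f : rform) : Prop := fvars f = [::] /\ fpars f = [::].

Definition models (R : comPzRingType) (f : rform) : Prop :=
  fholds (fun _ _ => 0 : R) (fun _ => 0 : R) f.

Definition elem_equiv (A B : comPzRingType) : Prop :=
  forall f, sentence f -> (models A f <-> models B f).

(* D is a formula D(y_1,...,y_m) where y_i has length k i *)
Definition formula_in (m : nat) (k : 'I_m -> nat) (D : rform) : Prop :=
  fvars D = [::] /\
  (forall ij, ij \in fpars D -> exists i : 'I_m, ij.1 = i /\ ij.2 < k i)%N.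

Definition par_env (R : comPzRingType) (m : nat) (b : 'I_m -> seq R)
  : nat -> nat -> R :=
  fun i j => match (insub i : option 'I_m) with
             | Some i' => (b i')`_j
             | None => 0
             end.

Definition sat (R : comPzRingType) (m : nat) (b : 'I_m -> seq R) (D : rform)
  : Prop := fholds (par_env b) (fun _ => 0) D.

Definition idl (R : comPzRingType) (b : seq R) : R -> Prop :=
  fun x => exists z : seq R, size z = size b /\
             x = \sum_(j < size b) b`_j * z`_j.

Definition prime_ideal (R : comPzRingType) (I : R -> Prop) : Prop :=
  ~ I 1 /\ (forall x y, I (x * y) -> I x \/ I y).

Definition prod_ideal (R : comPzRingType) (m : nat) (I : 'I_m -> R -> Prop)
  : R -> Prop :=
  fun x => exists (n : nat) (f : 'I_n -> 'I_m -> R),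
     (forall l i, I i (f l i)) /\
     x = \sum_(l < n) \prod_(i < m) f l i.

Definition zero_ideal (R : comPzRingType) (I : R -> Prop) : Prop :=
  forall x, I x -> x = 0.

(* char(R/I) = c : the kernel of Z -> R/I is cZ, i.e. d.1 in I iff c | d *)
Definition quot_char (R : comPzRingType) (I : R -> Prop) (c : nat) : Prop :=
  forall d : nat, I d%:R <-> (c %| d)%N.

Definition number_of_zeros (m : nat) (c : 'I_m -> nat) : nat :=
  #|[pred i : 'I_m | c i == 0%N]|.

From HB Require Import structures.
From mathcomp Require Import all_boot all_order all_algebra.
From mathcomp Require Import zify.
From Stdlib Require Import FunctionalExtensionality PropExtensionality Classical.
Set Implicit Arguments. Unset Strict Implicit. Unset Printing Implicit Defensive.
Import GRing.Theory.
Local Open Scope ring_scope.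

(* The formula D_Lambda(y_1, ..., y_m) is the conjunction of
     - "id(y_i) is prime": 1 ∉ id(y_i) and x x' ∈ id(y_i) -> x ∈ id(y_i) \/ x' ∈ id(y_i),
     - "id(y_1) ... id(y_m) = 0": x_i ∈ id(y_i) for all i -> x_1 ... x_m = 0,
     - "lambda_i ∈ id(y_i)", which for a prime ideal and a prime lambda_i says
       char(B/id(y_i)) = lambda_i (and is vacuous for lambda_i = 0),
   where membership x ∈ id(y) is the existential formula x = Σ_j y_j z_j.

   Transfer: if B ≡ A, B |= D_Lambda(b) and char(B/id(b_i)) = p > 0 although
   lambda_i = 0, then B satisfies the sentence "∃ y, D_Lambda'(y)" with
   lambda' = lambda[i := p]; so does A, giving a decomposition of 0 in A whose
   characteristic tuple has fewer zeros than lambda, against minimality. *)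

Definition set_block (R : Type) (e : nat -> R) (n : nat) (z : nat -> R) (l : nat)
  : nat -> R :=
  fun v => if (n <= v < n + l)%N then z (v - n)%N else e v.

Lemma set_block_lt (R : Type) (e : nat -> R) n z l v :
  (v < n)%N -> set_block e n z l v = e v.
Proof. by move=> lt_vn; rewrite /set_block leqNgt lt_vn. Qed.

Lemma set_block_in (R : Type) (e : nat -> R) n z l j :
  (j < l)%N -> set_block e n z l (n + j) = z j.
Proof. by move=> lt_jl; rewrite /set_block leq_addr ltn_add2l lt_jl addKn. Qed.

Lemma set_block0 (R : Type) (e : nat -> R) n z : set_block e n z 0 = e.
Proof.
by apply: functional_extensionality => v; rewrite /set_block addn0 ltnNge andbN.
Qed.

Definition zcons (R : Type) (x : R) (z : nat -> R) : nat -> R :=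
  fun j => if j is j'.+1 then z j' else x.

Lemma set_blockS (R : Type) (e : nat -> R) n x z l :
  set_block (set_env e n x) n.+1 z l = set_block e n (zcons x z) l.+1.
Proof.
apply: functional_extensionality => v; rewrite /set_block /set_env /zcons.
case: (ltngtP v n) => [//|lt_nv|->]; last by rewrite subnn addnS ltnS leq_addr.
rewrite /= addSn addnS; case: ifP => // _.
by move: lt_nv; rewrite -subn_gt0 subnS; case: (v - n)%N.
Qed.

Lemma zcons_eta (R : Type) (z : nat -> R) : zcons (z 0%N) (fun j => z j.+1) = z.
Proof. by apply: functional_extensionality; case. Qed.

Fixpoint qblock (Q : nat -> rform -> rform) (n l : nat) (f : rform) : rform :=
  if l is l'.+1 then Q n (qblock Q n.+1 l' f) else f.

Notation ex_block := (qblock REx).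
Notation all_block := (qblock RAll).

Lemma ex_blockP (R : comPzRingType) (p : nat -> nat -> R) l : forall e n f,
  fholds p e (ex_block n l f) <-> exists z, fholds p (set_block e n z l) f.
Proof.
elim: l => [|l IHl] e n f /=.
  by split=> [hf | [z]]; [exists (fun=> 0) | ]; rewrite set_block0.
split=> [[x /IHl [z hz]] | [z hz]].
  by exists (zcons x z); rewrite -set_blockS.
by exists (z 0%N); apply/IHl; exists (fun j => z j.+1); rewrite set_blockS zcons_eta.
Qed.

Lemma all_blockP (R : comPzRingType) (p : nat -> nat -> R) l : forall e n f,
  fholds p e (all_block n l f) <-> forall z, fholds p (set_block e n z l) f.
Proof.
elim: l => [|l IHl] e n f /=.
  by split=> [hf z | /(_ (fun=> 0))]; rewrite set_block0.
split=> [hf z | hf x]; last by apply/IHl => z; rewrite set_blockS.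
by rewrite -(zcons_eta z) -set_blockS; apply: (proj1 (IHl _ _ _) (hf _)).
Qed.

Definition tscoped (V : pred nat) (P : pred (nat * nat)) (t : rterm) : bool :=
  all V (tvars t) && all P (tpars t).

Definition fscoped (V : pred nat) (P : pred (nat * nat)) (f : rform) : bool :=
  all V (fvars f) && all P (fpars f).

Section Scoping.
Variables (V : pred nat) (P : pred (nat * nat)).

Lemma tscoped_var v : tscoped V P (RVar v) = V v.
Proof. by rewrite /tscoped /= !andbT. Qed.

Lemma tscoped_par i j : tscoped V P (RPar i j) = P (i, j).
Proof. by rewrite /tscoped /= !andbT. Qed.

Lemma tscopedD t u : tscoped V P (RAdd t u) = tscoped V P t && tscoped V P u.
Proof. by rewrite /tscoped /= !all_cat andbACA. Qed.

Lemma tscopedM t u : tscoped V P (RMul t u) = tscoped V P t && tscoped V P u.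
Proof. by rewrite /tscoped /= !all_cat andbACA. Qed.

Lemma fscoped_eq t u : fscoped V P (REq t u) = tscoped V P t && tscoped V P u.
Proof. by rewrite /fscoped /tscoped /= !all_cat andbACA. Qed.

Lemma fscoped_and f g : fscoped V P (RAnd f g) = fscoped V P f && fscoped V P g.
Proof. by rewrite /fscoped /= !all_cat andbACA. Qed.

Lemma fscoped_or f g : fscoped V P (ROr f g) = fscoped V P f && fscoped V P g.
Proof. by rewrite /fscoped /= !all_cat andbACA. Qed.

Lemma fscoped_imp f g : fscoped V P (RImp f g) = fscoped V P f && fscoped V P g.
Proof. by rewrite /fscoped /= !all_cat andbACA. Qed.

Lemma fscoped_bind (Q : nat -> rform -> rform) n g :
  (Q = REx \/ Q = RAll) ->
  fscoped [pred v | V v || (v == n)] P g -> fscoped V P (Q n g).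
Proof.
case=> -> /andP[hV hP]; rewrite /fscoped /= all_filter hP andbT;
  by apply: sub_all hV => v /= /orP[-> | /eqP->]; rewrite ?implybT ?eqxx.
Qed.

End Scoping.

Lemma tscopedW (V V' : pred nat) P t :
  subpred V V' -> tscoped V P t -> tscoped V' P t.
Proof. by move=> sVV' /andP[hV hP]; rewrite /tscoped hP (sub_all sVV' hV). Qed.

Lemma fscopedW (V V' : pred nat) P f :
  subpred V V' -> fscoped V P f -> fscoped V' P f.
Proof. by move=> sVV' /andP[hV hP]; rewrite /fscoped hP (sub_all sVV' hV). Qed.

Lemma tscopedU (V W : pred nat) P t : tscoped V P t -> tscoped [pred v | V v || W v] P t.
Proof. by apply: tscopedW => v /= ->. Qed.

Lemma fscoped_qblock (Q : nat -> rform -> rform) P l : (Q = REx \/ Q = RAll) ->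
  forall V n g, fscoped [pred v | V v || (n <= v < n + l)%N] P g ->
  fscoped V P (qblock Q n l g).
Proof.
move=> hQ; elim: l => [|l IHl] V n g hg /=.
  by apply: fscopedW hg => v /=; case: (V v) => //=; lia.
apply: fscoped_bind => //; apply: IHl; apply: fscopedW hg => v /=.
by case: (V v) => //=; lia.
Qed.

Fixpoint tsum (l : nat) (F : nat -> rterm) : rterm :=
  if l is l'.+1 then RAdd (tsum l' F) (F l') else RZero.

Fixpoint tprod (l : nat) (F : nat -> rterm) : rterm :=
  if l is l'.+1 then RMul (tprod l' F) (F l') else ROne.

Definition tnat (d : nat) : rterm := tsum d (fun=> ROne).

Section TermEvaluation.
Variables (R : comPzRingType) (p : nat -> nat -> R) (e : nat -> R).

Lemma teval_tsum l F : teval p e (tsum l F) = \sum_(j < l) teval p e (F j).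
Proof. by elim: l => [|l IHl] /=; rewrite ?big_ord0 // big_ord_recr IHl. Qed.

Lemma teval_tprod l F : teval p e (tprod l F) = \prod_(j < l) teval p e (F j).
Proof. by elim: l => [|l IHl] /=; rewrite ?big_ord0 // big_ord_recr IHl. Qed.

Lemma teval_tnat d : teval p e (tnat d) = d%:R.
Proof. by rewrite teval_tsum sumr_const card_ord. Qed.

End TermEvaluation.

Lemma tscoped_tsum V P l F :
  (forall j, (j < l)%N -> tscoped V P (F j)) -> tscoped V P (tsum l F).
Proof.
elim: l => [|l IHl] hF //=; rewrite tscopedD hF // andbT.
by apply: IHl => j lt_jl; apply: hF; rewrite ltnS ltnW.
Qed.

Lemma tscoped_tprod V P l F :
  (forall j, (j < l)%N -> tscoped V P (F j)) -> tscoped V P (tprod l F).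
Proof.
elim: l => [|l IHl] hF //=; rewrite tscopedM hF // andbT.
by apply: IHl => j lt_jl; apply: hF; rewrite ltnS ltnW.
Qed.

Lemma tscoped_tnat V P d : tscoped V P (tnat d).
Proof. exact: tscoped_tsum. Qed.

Definition vars_below (N : nat) (t : rterm) : bool :=
  tscoped (fun v => v < N)%N predT t.

Lemma vars_belowW N M t : (N <= M)%N -> vars_below N t -> vars_below M t.
Proof. by move=> le_NM; apply: tscopedW => v /= /leq_trans; apply. Qed.

Lemma vars_below_var N v : (v < N)%N -> vars_below N (RVar v).
Proof. by rewrite /vars_below tscoped_var. Qed.

Lemma teval_set_block (R : comPzRingType) (p : nat -> nat -> R) e n z l t :
  vars_below n t -> teval p (set_block e n z l) t = teval p e t.
Proof.
rewrite /vars_below; elim: t => [v|i j|||t IHt u IHu|t IHt|t IHt u IHu] //=;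
  rewrite ?tscoped_var ?tscopedD ?tscopedM.
- exact: set_block_lt.
- by case/andP=> /IHt-> /IHu->.
- by move/IHt->.
- by case/andP=> /IHt-> /IHu->.
Qed.

Definition ftrue : rform := RNot RFalse.

Definition fconj (m : nat) (F : 'I_m -> rform) : rform :=
  foldr RAnd ftrue (map F (enum 'I_m)).

Lemma fconjP (R : comPzRingType) (p : nat -> nat -> R) e m (F : 'I_m -> rform) :
  fholds p e (fconj F) <-> forall i, fholds p e (F i).
Proof.
suff conj_seq (s : seq 'I_m) :
    fholds p e (foldr RAnd ftrue (map F s)) <-> {in s, forall i, fholds p e (F i)}.
  by rewrite conj_seq; split=> hF i; [apply: hF; rewrite mem_enum | move=> _].
elim: s => [|i s IHs] /=; first by split=> [_ i | _ []]; rewrite ?in_nil.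
rewrite IHs; split=> [[hi hs] j | hs]; first by rewrite in_cons => /orP[/eqP-> | /hs].
by split=> [|j hj]; apply: hs; rewrite in_cons ?eqxx ?hj ?orbT.
Qed.

Lemma fscoped_fconj V P m (F : 'I_m -> rform) :
  (forall i, fscoped V P (F i)) -> fscoped V P (fconj F).
Proof.
by move=> hF; rewrite /fconj; elim: (enum 'I_m) => //= i s IHs; rewrite fscoped_and hF.
Qed.

Definition gen_ideal (R : comPzRingType) (g : nat -> R) (l : nat) (x : R) : Prop :=
  exists z : nat -> R, x = \sum_(j < l) g j * z j.

Record is_ideal (R : comPzRingType) (I : R -> Prop) : Prop := IsIdeal {
  ideal0 : I 0;
  idealD : forall x y, I x -> I y -> I (x + y);
  idealMl : forall r x, I x -> I (r * x) }.

Lemma idealB (R : comPzRingType) (I : R -> Prop) x y :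
  is_ideal I -> I x -> I y -> I (x - y).
Proof.
by move=> idI Ix Iy; rewrite -mulN1r; apply: (idealD idI) => //; apply: (idealMl idI).
Qed.

Section GeneratedIdeals.
Variable R : comPzRingType.

Lemma gen_ideal_is_ideal (g : nat -> R) l : is_ideal (gen_ideal g l).
Proof.
split.
- by exists (fun=> 0); rewrite big1 // => j _; rewrite mulr0.
- move=> _ _ [z ->] [w ->]; exists (fun j => z j + w j).
  by rewrite -big_split; apply: eq_bigr => j _; rewrite mulrDr.
- move=> r _ [z ->]; exists (fun j => r * z j).
  by rewrite mulr_sumr; apply: eq_bigr => j _; rewrite mulrCA.
Qed.

Lemma gen_ideal_ext (g g' : nat -> R) l :
  (forall j, (j < l)%N -> g j = g' j) -> gen_ideal g l = gen_ideal g' l.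
Proof.
move=> eq_g; apply: functional_extensionality => x; apply: propositional_extensionality.
by split=> -[z ->]; exists z; apply: eq_bigr => j _; rewrite eq_g.
Qed.

Lemma idl_gen_ideal (b : seq R) (g : nat -> R) :
  (forall j, (j < size b)%N -> b`_j = g j) -> idl b = gen_ideal g (size b).
Proof.
move=> eq_bg; rewrite -(gen_ideal_ext eq_bg).
apply: functional_extensionality => x; apply: propositional_extensionality; split.
  by case=> z [_ ->]; exists (nth 0 z).
case=> z ->; exists (mkseq z (size b)); rewrite size_mkseq; split=> //.
by apply: eq_bigr => j _; rewrite nth_mkseq.
Qed.

Lemma idl_is_ideal (b : seq R) : is_ideal (idl b).
Proof. by rewrite (@idl_gen_ideal b (nth 0 b)) //; apply: gen_ideal_is_ideal. Qed.

End GeneratedIdeals.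

Section QuotientCharacteristic.
Variables (R : comPzRingType) (I : R -> Prop).

Lemma quot_char_unique c c' : quot_char I c -> quot_char I c' -> c = c'.
Proof.
move=> hc hc'; apply/eqP; rewrite eqn_dvd.
by apply/andP; split; [apply/hc/hc' | apply/hc'/hc]; rewrite dvdnn.
Qed.

(* For a proper ideal and a prime p, char(R/I) = p as soon as p lies in I:
   otherwise a Bezout relation 1 + a d = q p would put 1 in I. *)
Lemma quot_char_prime p :
  is_ideal I -> ~ I 1 -> prime p -> quot_char I p <-> I p%:R.
Proof.
move=> idI notI1 pr_p; split=> [hp | Ip d]; first exact/hp.
split=> [Id | /dvdnP[q ->]]; last by rewrite natrM; apply: idealMl.
apply/negPn/negP => ndvd; apply: notI1.
have /eqP cop : coprime p d by rewrite prime_coprime.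
have [a _ /dvdnP[q bezout]] := Bezoutl d (prime_gt0 pr_p); rewrite cop in bezout.
have -> : (1 : R) = (q * p)%:R - (a * d)%:R by rewrite -bezout natrD addrK.
by apply: idealB => //; rewrite natrM; apply: idealMl.
Qed.

Lemma prime_ideal_prime_nat d :
  prime_ideal I -> (0 < d)%N -> I d%:R -> exists2 p, prime p & I p%:R.
Proof.
case=> notI1 prI; elim/ltn_ind: d => d IHd d_gt0 Id.
have [d_le1 | d_gt1] := leqP d 1.
  by move: Id; have -> : d = 1%N by lia; move/notI1.
have pr_p := pdiv_prime d_gt1; have p_gt1 := prime_gt1 pr_p.
move: Id; rewrite -(divnK (pdiv_dvd d)) natrM => /prI[Iq | Ip]; last by exists (pdiv d).
apply: IHd Iq; first exact: ltn_Pdiv.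
by rewrite divn_gt0 ?pdiv_leq // ltnW.
Qed.

Lemma quot_char_exists :
  is_ideal I -> prime_ideal I -> exists2 c, c = 0%N \/ prime c & quot_char I c.
Proof.
move=> idI prI.
have [[d [d_gt0 Id]] | no_pos] := classic (exists d, (0 < d)%N /\ I d%:R).
  have [p pr_p Ip] := prime_ideal_prime_nat prI d_gt0 Id.
  by exists p; [right | apply/quot_char_prime => //; case: prI].
exists 0%N; first by left.
move=> d; rewrite dvd0n; split=> [Id | /eqP->]; last exact: ideal0.
by case: (posnP d) => // d_gt0; case: no_pos; exists d.
Qed.

End QuotientCharacteristic.

Definition mem_idealf (n : nat) (y : nat -> rterm) (l : nat) (t : rterm) : rform :=
  ex_block n l (REq t (tsum l (fun j => RMul (y j) (RVar (n + j))))).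

Lemma mem_idealfP (R : comPzRingType) (p : nat -> nat -> R) e n y l t :
  vars_below n t -> (forall j, (j < l)%N -> vars_below n (y j)) ->
  fholds p e (mem_idealf n y l t) <->
  gen_ideal (fun j => teval p e (y j)) l (teval p e t).
Proof.
move=> ht hy; rewrite ex_blockP /=.
have sum_eval z : teval p (set_block e n z l) (tsum l (fun j => RMul (y j) (RVar (n + j))))
    = \sum_(j < l) teval p e (y j) * z j.
  rewrite teval_tsum; apply: eq_bigr => j _ /=.
  by rewrite teval_set_block ?hy // set_block_in.
by split=> -[z hz]; exists z; move: hz; rewrite sum_eval teval_set_block.
Qed.

Lemma fscoped_mem_idealf V P n y l t :
  tscoped V P t -> (forall j, (j < l)%N -> tscoped V P (y j)) ->
  fscoped V P (mem_idealf n y l t).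
Proof.
move=> ht hy; apply: fscoped_qblock; first by left.
rewrite fscoped_eq (tscopedU _ ht); apply: tscoped_tsum => j lt_jl.
by rewrite tscopedM (tscopedU _ (hy j lt_jl)) tscoped_var /= leq_addr ltn_add2l lt_jl orbT.
Qed.

Definition primef (N : nat) (y : nat -> rterm) (l : nat) : rform :=
  RAnd (RNot (mem_idealf N y l ROne))
   (all_block N 2 (RImp (mem_idealf N.+2 y l (RMul (RVar N) (RVar N.+1)))
      (ROr (mem_idealf N.+2 y l (RVar N)) (mem_idealf N.+2 y l (RVar N.+1))))).

Lemma primefP (R : comPzRingType) (p : nat -> nat -> R) e N y l :
  (forall j, (j < l)%N -> vars_below N (y j)) ->
  fholds p e (primef N y l) <-> prime_ideal (gen_ideal (fun j => teval p e (y j)) l).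
Proof.
move=> hy; have hy2 j : (j < l)%N -> vars_below N.+2 (y j).
  by move/hy; apply: vars_belowW; rewrite leqW.
have mem2 z t : vars_below N.+2 t ->
    fholds p (set_block e N z 2) (mem_idealf N.+2 y l t) <->
    gen_ideal (fun j => teval p e (y j)) l (teval p (set_block e N z 2) t).
  move=> ht; rewrite mem_idealfP // (@gen_ideal_ext _ _ (fun j => teval p e (y j))) //.
  by move=> j /hy; apply: teval_set_block.
have val z : set_block e N z 2 N = z 0%N /\ set_block e N z 2 N.+1 = z 1%N.
  by move: (set_block_in e N z (isT : 0 < 2)%N) (set_block_in e N z (isT : 1 < 2)%N);
    rewrite addn0 addn1.
have vN : vars_below N.+2 (RVar N) := vars_below_var (leqW (ltnSn N)).
have vN1 : vars_below N.+2 (RVar N.+1) := vars_below_var (ltnSn N.+1).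
have vNN1 : vars_below N.+2 (RMul (RVar N) (RVar N.+1)).
  by rewrite /vars_below tscopedM; apply/andP.
rewrite /primef; cbn [fholds]; rewrite mem_idealfP // all_blockP.
split=> -[notI1 prI]; split=> //.
  move=> x x'; have [vx vx'] := val (fun j => if j is 0 then x else x').
  move: (prI (fun j => if j is 0 then x else x')); cbn [fholds].
  by rewrite !mem2 //= vx vx'; apply.
move=> z; have [vx vx'] := val z; cbn [fholds].
by rewrite !mem2 //= vx vx'; apply: prI.
Qed.

Lemma fscoped_primef V P N y l :
  (forall j, (j < l)%N -> tscoped V P (y j)) -> fscoped V P (primef N y l).
Proof.
move=> hy; rewrite fscoped_and; apply/andP; split; first exact: fscoped_mem_idealf.
apply: fscoped_qblock; first by right.
pose W := [pred v | V v || (N <= v < N + 2)%N].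
have hyW j : (j < l)%N -> tscoped W P (y j) by move/hy; apply: tscopedU.
have varW v : (N <= v < N + 2)%N -> tscoped W P (RVar v).
  by rewrite tscoped_var /= => ->; rewrite orbT.
rewrite fscoped_imp fscoped_or !fscoped_mem_idealf ?tscopedM ?varW //; lia.
Qed.

Definition prod_zerof m (k : 'I_m -> nat) (N : nat) (Y : 'I_m -> nat -> rterm)
  : rform :=
  all_block N m (RImp (fconj (fun i => mem_idealf (N + m) (Y i) (k i) (RVar (N + i))))
                      (REq (tprod m (fun i => RVar (N + i))) RZero)).

Lemma prod_zerofP (R : comPzRingType) (p : nat -> nat -> R) e m (k : 'I_m -> nat) N Y :
  (forall i j, (j < k i)%N -> vars_below N (Y i j)) ->
  fholds p e (prod_zerof k N Y) <->
  forall f : 'I_m -> R,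
    (forall i, gen_ideal (fun j => teval p e (Y i j)) (k i) (f i)) -> \prod_(i < m) f i = 0.
Proof.
move=> hY; rewrite all_blockP.
have mem z (i : 'I_m) :
    fholds p (set_block e N z m) (mem_idealf (N + m) (Y i) (k i) (RVar (N + i))) <->
    gen_ideal (fun j => teval p e (Y i j)) (k i) (z i).
  rewrite mem_idealfP /= ?set_block_in //; last first.
  - by move=> j /hY; apply: vars_belowW; rewrite leq_addr.
  - by apply: vars_below_var; rewrite ltn_add2l.
  by rewrite (@gen_ideal_ext _ _ (fun j => teval p e (Y i j))) // => j /hY /teval_set_block.
have prod_eval z : teval p (set_block e N z m) (tprod m (fun i => RVar (N + i)))
    = \prod_(i < m) z i.
  by rewrite teval_tprod; apply: eq_bigr => i _; rewrite /= set_block_in.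
split=> [hz f hf | hf z]; last first.
  by cbn [fholds]; rewrite fconjP prod_eval => hmem; apply: (hf (fun i => z i)) => i; apply/mem.
pose z v := if insub v is Some i then f i else 0.
have zf (i : 'I_m) : z i = f i by rewrite /z valK.
move: (hz z); cbn [fholds]; rewrite fconjP prod_eval (eq_bigr _ (fun i _ => zf i)).
by apply=> i; apply/mem; rewrite zf.
Qed.

Lemma fscoped_prod_zerof V P m (k : 'I_m -> nat) N Y :
  (forall i j, (j < k i)%N -> tscoped V P (Y i j)) -> fscoped V P (prod_zerof k N Y).
Proof.
move=> hY; apply: fscoped_qblock; first by right.
have varW (i : nat) : (i < m)%N ->
    tscoped [pred v | V v || (N <= v < N + m)%N] P (RVar (N + i)).
  by move=> lt_im; rewrite tscoped_var /= leq_addr ltn_add2l lt_im orbT.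
rewrite fscoped_imp fscoped_eq tscoped_tprod //= andbT.
apply: fscoped_fconj => i; apply: fscoped_mem_idealf => [|j /hY]; last exact: tscopedU.
exact: varW.
Qed.

(* The formula D: each id(Y_i) is prime, their product is zero, and
   Lam_i ∈ id(Y_i) (trivially true when Lam_i = 0). *)
Definition decompf m (k Lam : 'I_m -> nat) (N : nat) (Y : 'I_m -> nat -> rterm)
  : rform :=
  RAnd (fconj (fun i => primef N (Y i) (k i)))
   (RAnd (prod_zerof k N Y) (fconj (fun i => mem_idealf N (Y i) (k i) (tnat (Lam i))))).

Lemma fscoped_decompf V P m (k Lam : 'I_m -> nat) N Y :
  (forall i j, (j < k i)%N -> tscoped V P (Y i j)) -> fscoped V P (decompf k Lam N Y).
Proof.
move=> hY; rewrite !fscoped_and fscoped_prod_zerof // !fscoped_fconj // => i.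
  exact: fscoped_mem_idealf (tscoped_tnat _ _ _) (hY i).
exact: fscoped_primef (hY i).
Qed.

Definition decomposition (R : comPzRingType) m (Lam : 'I_m -> nat)
  (I : 'I_m -> R -> Prop) : Prop :=
  (forall i, prime_ideal (I i)) /\ zero_ideal (prod_ideal I) /\
  (forall i, (0 < Lam i)%N -> quot_char (I i) (Lam i)).

Lemma zero_prod_ideal (R : comPzRingType) m (I : 'I_m -> R -> Prop) :
  zero_ideal (prod_ideal I) <->
  forall f : 'I_m -> R, (forall i, I i (f i)) -> \prod_(i < m) f i = 0.
Proof.
split=> [hz f hf | hf x [n [f [If ->]]]]; last by apply: big1 => l _; apply: hf.
by apply: hz; exists 1%N, (fun _ i => f i); rewrite big_ord1.
Qed.

Lemma decompf_sem (R : comPzRingType) (p : nat -> nat -> R) e m (k Lam : 'I_m -> nat)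
    N Y :
  (forall i, prime (Lam i) \/ Lam i = 0%N) ->
  (forall i j, (j < k i)%N -> vars_below N (Y i j)) ->
  fholds p e (decompf k Lam N Y) <->
  decomposition Lam (fun i => gen_ideal (fun j => teval p e (Y i j)) (k i)).
Proof.
move=> hLam hY; rewrite /decompf /decomposition; cbn [fholds].
rewrite !fconjP prod_zerofP // zero_prod_ideal.
have char_i i : prime_ideal (gen_ideal (fun j => teval p e (Y i j)) (k i)) ->
    fholds p e (mem_idealf N (Y i) (k i) (tnat (Lam i))) <->
    ((0 < Lam i)%N -> quot_char (gen_ideal (fun j => teval p e (Y i j)) (k i)) (Lam i)).
  case=> notI1 _; rewrite mem_idealfP ?teval_tnat; [| exact: tscoped_tnat | exact: hY].
  have idI := gen_ideal_is_ideal (fun j => teval p e (Y i j)) (k i).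
  case: (hLam i) => [pr_L | ->]; last by split=> // _; apply: ideal0.
  by rewrite quot_char_prime // prime_gt0 //; split=> // /(_ isT).
split=> -[hp [hz hc]].
  have hp' i := (primefP p e (hY i)).1 (hp i).
  by split=> //; split=> // i; apply/(char_i i (hp' i)).
split=> [i | ]; first exact/(primefP p e (hY i)).
by split=> // i; apply/(char_i i (hp i)); apply: hc.
Qed.

Definition D_Lambda m (k Lam : 'I_m -> nat) : rform :=
  decompf k Lam 0 (fun i j => RPar i j).

Lemma D_Lambda_formula_in m (k Lam : 'I_m -> nat) : formula_in k (D_Lambda k Lam).
Proof.
pose P := [pred ij : nat * nat | [exists i : 'I_m, (ij.1 == i) && (ij.2 < k i)%N]].
have /andP[hV /allP hP] : fscoped pred0 P (D_Lambda k Lam).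
  apply: fscoped_decompf => i j lt_jk; rewrite tscoped_par.
  by apply/existsP; exists i; rewrite eqxx.
split; first by move: hV; rewrite all_pred0 => /nilP.
by move=> ij /hP /existsP[i /andP[/eqP ? ?]]; exists i.
Qed.

Lemma D_Lambda_sat (R : comPzRingType) m (k Lam : 'I_m -> nat) (b : 'I_m -> seq R) :
  (forall i, prime (Lam i) \/ Lam i = 0%N) -> (forall i, size (b i) = k i) ->
  sat b (D_Lambda k Lam) <-> decomposition Lam (fun i => idl (b i)).
Proof.
move=> hLam hb; rewrite /sat decompf_sem //.
suff -> : (fun i => idl (b i)) =
    (fun i => gen_ideal (fun j => teval (par_env b) (fun=> 0) (RPar i j)) (k i)) by [].
apply: functional_extensionality => i; rewrite -hb.
by apply: idl_gen_ideal => j _; rewrite /= /par_env valK.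
Qed.

(* Flattening of the parameter y_(i,j) into the variable x_(i K + j). *)
Lemma flat_index_bound m (k : 'I_m -> nat) K (i : 'I_m) j :
  (forall i, k i <= K)%N -> (j < k i)%N -> (i * K + j < m * K)%N.
Proof.
move=> hK lt_jk; have := hK i; have := ltn_ord i; move: lt_jk.
by move: (k i) (nat_of_ord i) => ki ni; nia.
Qed.

Definition decomp_sentence m (k Lam : 'I_m -> nat) (K : nat) : rform :=
  ex_block 0 (m * K) (decompf k Lam (m * K) (fun i j => RVar (i * K + j))).

Lemma decomp_sentence_closed m (k Lam : 'I_m -> nat) K :
  (forall i, k i <= K)%N -> sentence (decomp_sentence k Lam K).
Proof.
move=> hK; have /andP[hV hP] : fscoped pred0 pred0 (decomp_sentence k Lam K).
  apply: fscoped_qblock; first by left.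
  apply: fscoped_decompf => i j lt_jk; rewrite tscoped_var /= add0n.
  exact: flat_index_bound.
by move: hV hP; rewrite !all_pred0 => /nilP hV /nilP.
Qed.

Lemma decomp_sentence_models (R : comPzRingType) m (k Lam : 'I_m -> nat) K :
  (forall i, prime (Lam i) \/ Lam i = 0%N) -> (forall i, k i <= K)%N ->
  models R (decomp_sentence k Lam K) <->
  exists b : 'I_m -> seq R,
    (forall i, size (b i) = k i) /\ decomposition Lam (fun i => idl (b i)).
Proof.
move=> hLam hK; rewrite /models ex_blockP.
have sem (z : nat -> R) : fholds (fun _ _ => 0) (set_block (fun=> 0) 0 z (m * K))
      (decompf k Lam (m * K) (fun i j => RVar (i * K + j))) <->
    decomposition Lam (fun i => gen_ideal (fun j => z (i * K + j)%N) (k i)).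
  rewrite decompf_sem //; last first.
    by move=> i j lt_jk; apply: vars_below_var; apply: flat_index_bound.
  suff -> : (fun i : 'I_m => gen_ideal (fun j => z (i * K + j)%N) (k i)) =
      (fun i => gen_ideal (fun j => teval (fun _ _ => 0) (set_block (fun=> 0) 0 z (m * K))
         (RVar (i * K + j))) (k i)) by [].
  apply: functional_extensionality => i; apply: gen_ideal_ext => j lt_jk /=.
  by move: (set_block_in (fun=> 0 : R) 0 z (flat_index_bound hK lt_jk)); rewrite add0n.
have tuples_of_block (b : 'I_m -> seq R) (z : nat -> R) : (forall i, size (b i) = k i) ->
    (forall (i : 'I_m) j, (j < k i)%N -> (b i)`_j = z (i * K + j)%N) ->
    (fun i => idl (b i)) = (fun i : 'I_m => gen_ideal (fun j => z (i * K + j)%N) (k i)).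
  move=> hb hbz; apply: functional_extensionality => i; rewrite -hb.
  by apply: idl_gen_ideal => j; rewrite hb; apply: hbz.
split=> [[z /sem hz] | [b [hb hdec]]].
  exists (fun i : 'I_m => mkseq (fun j => z (i * K + j)%N) (k i)).
  have hb (i : 'I_m) : size (mkseq (fun j => z (i * K + j)%N) (k i)) = k i by rewrite size_mkseq.
  by split=> //; rewrite (tuples_of_block _ z hb) // => i j lt_jk; rewrite nth_mkseq.
pose z v := if insub (v %/ K)%N is Some i then (b i)`_(v %% K) else 0.
exists z; apply/sem; rewrite -(tuples_of_block b z hb) // => i j lt_jk.
have lt_jK := leq_trans lt_jk (hK i); have K_gt0 : (0 < K)%N by apply: leq_ltn_trans lt_jK.
by rewrite /z divnMDl // divn_small // addn0 valK modnMDl modn_small.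
Qed.

Lemma decomposition_transfer (A B : comPzRingType) m (k Lam : 'I_m -> nat) :
  (forall i, prime (Lam i) \/ Lam i = 0%N) -> elem_equiv A B ->
  (exists b : 'I_m -> seq B,
     (forall i, size (b i) = k i) /\ decomposition Lam (fun i => idl (b i))) ->
  exists a : 'I_m -> seq A, decomposition Lam (fun i => idl (a i)).
Proof.
move=> hLam hAB hB; pose K := \max_(i < m) k i.
have hK i : (k i <= K)%N by apply: leq_bigmax.
have /(decomp_sentence_models _ hLam hK) [a [_ ha]] : models A (decomp_sentence k Lam K).
  by apply/(hAB _ (decomp_sentence_closed Lam hK)); apply/decomp_sentence_models.
by exists a.
Qed.

Lemma number_of_zeros_le m (c c' : 'I_m -> nat) :
  (forall i, c i = 0%N -> c' i = 0%N) -> (number_of_zeros c <= number_of_zeros c')%N.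
Proof.
move=> hcc'; apply: subset_leq_card; apply/subsetP => i.
by rewrite !inE => /eqP/hcc'->.
Qed.

Lemma number_of_zeros_set m (c : 'I_m -> nat) i p : c i = 0%N -> (0 < p)%N ->
  (number_of_zeros (fun j => if j == i then p else c j) < number_of_zeros c)%N.
Proof.
move=> ci0 p_gt0; apply: proper_card; apply/properP; split.
  by apply/subsetP => j; rewrite !inE; case: (eqVneq j i) => [-> | _ //]; rewrite ci0.
by exists i; rewrite inE ?ci0 // eqxx -lt0n.
Qed.

Definition minimal_zeros (A : comPzRingType) m (Lam : 'I_m -> nat) : Prop :=
  forall (a : 'I_m -> seq A) (c : 'I_m -> nat),
    (forall i, prime_ideal (idl (a i))) ->
    zero_ideal (prod_ideal (fun i => idl (a i))) ->
    (forall i, quot_char (idl (a i)) (c i)) ->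
    (number_of_zeros Lam <= number_of_zeros c)%N.

(* Core of the transfer: if char(B/q_i) were a prime p although Lam_i = 0,
   then B, hence A, would have a decomposition with characteristics
   Lam[i := p], which has one zero fewer than Lam, against minimality. *)
Lemma minimal_char_zero (A B : comPzRingType) m (k Lam : 'I_m -> nat)
    (b : 'I_m -> seq B) i :
  (forall i, prime (Lam i) \/ Lam i = 0%N) -> minimal_zeros A Lam ->
  elem_equiv A B -> (forall i, size (b i) = k i) ->
  decomposition Lam (fun i => idl (b i)) ->
  Lam i = 0%N -> quot_char (idl (b i)) 0.
Proof.
move=> hLam hmin hAB hb [hp [hz hc]] Li0.
have [c [-> // | pr_c] hci] := quot_char_exists (idl_is_ideal (b i)) (hp i).
pose Lam' j := if j == i then c else Lam j.
have hLam' j : prime (Lam' j) \/ Lam' j = 0%N.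
  by rewrite /Lam'; case: eqP => _; [left | apply: hLam].
have decB : decomposition Lam' (fun j => idl (b j)).
  by split=> //; split=> // j; rewrite /Lam'; case: eqP => [-> _ // | _]; apply: hc.
have [a [hpa [hza hca]]] := decomposition_transfer hLam' hAB (ex_intro _ b (conj hb decB)).
have /fin_all_exists [c' hc'] : forall j, exists c, quot_char (idl (a j)) c.
  by move=> j; have [c'j _ ?] := quot_char_exists (idl_is_ideal (a j)) (hpa j); exists c'j.
(* characteristic zeros of a are zeros of Lam', by uniqueness of characteristics *)
have le_c'_Lam' : (number_of_zeros c' <= number_of_zeros Lam')%N.
  apply: number_of_zeros_le => j c'j0; have [// | Lj_gt0] := posnP (Lam' j).
  by move: (quot_char_unique (hc' j) (hca j Lj_gt0)); rewrite c'j0 => L0; rewrite -L0 in Lj_gt0.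
have := leq_trans (hmin a c' hpa hza hc') le_c'_Lam'.
by rewrite leqNgt number_of_zeros_set // prime_gt0.
Qed.

Theorem mainTheorem17 :
  forall (m : nat) (Lam : 'I_m -> nat) (k : 'I_m -> nat),
  (1 <= m)%N ->
  (forall i, prime (Lam i) \/ Lam i = 0%N) ->
  exists D : rform,
    formula_in k D /\
    (forall (B : comPzRingType) (b : 'I_m -> seq B),
       (forall i, size (b i) = k i) ->
       (sat b D <->
        ((forall i, prime_ideal (idl (b i))) /\
         zero_ideal (prod_ideal (fun i => idl (b i))) /\
         (forall i, (0 < Lam i)%N -> quot_char (idl (b i)) (Lam i))))) /\
    (forall (A : comPzRingType) (a : 'I_m -> seq A),
       (forall i, prime_ideal (idl (a i))) ->
       zero_ideal (prod_ideal (fun i => idl (a i))) ->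
       (forall i, quot_char (idl (a i)) (Lam i)) ->
       (forall (a' : 'I_m -> seq A) (c' : 'I_m -> nat),
          (forall i, prime_ideal (idl (a' i))) ->
          zero_ideal (prod_ideal (fun i => idl (a' i))) ->
          (forall i, quot_char (idl (a' i)) (c' i)) ->
          (number_of_zeros Lam <= number_of_zeros c')%N) ->
       forall (B : comPzRingType), elem_equiv A B ->
       forall b : 'I_m -> seq B,
         (forall i, size (b i) = k i) ->
         sat b D ->
         (forall i, prime_ideal (idl (b i))) /\
         zero_ideal (prod_ideal (fun i => idl (b i))) /\
         (forall i, quot_char (idl (b i)) (Lam i))).
Proof.
move=> m Lam k _ hLam; exists (D_Lambda k Lam); split; first exact: D_Lambda_formula_in.
split=> [B b hb | A a _ _ _ hmin B hAB b hb]; first exact: D_Lambda_sat.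
move=> /(D_Lambda_sat hLam hb) decB; have [hp [hz hc]] := decB.
split=> //; split=> // i; have [Li0 | Li_gt0] := posnP (Lam i); last exact: hc.
by rewrite Li0; apply: (minimal_char_zero hLam hmin hAB hb decB).
Qed.
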